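(* Let $n\ge1$, $m\ge0$, $a,b>0$, $I_{m,n,s}(x)=\int_s^x(1+t)^nt^m\,dt$, $\mu_s=\frac{(1+a)^na^mb+nI_{m,n-1,s}(a)}{I_{m,n,s}(a)}$ and $\tilde\psi_s(x)=\frac{\mu_sI_{m,n,s}(x)-nI_{m,n-1,s}(x)}{(1+x)^nx^m}$ for $s\in[0,a)$. Assume $\mu_0\le n$ and let $\lambda\in[0,a)$ be the unique solution of $\mu_\lambda(1+\lambda)=n$. Then for all $s\in(0,a)$ with $s\neq\lambda$ and all $x\in(0,a)$, $\tilde\psi_s(x)<\tilde\psi_\lambda(x)$. *)

From Stdlib Require Import Reals.
From Coquelicot Require Import Coquelicot.
Open Scope R_scope.

Definition Iint (m n : nat) (s x : R) : R :=
  RInt (fun t => (1 + t) ^ n * t ^ m) s x.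

Definition mu (m n : nat) (a b s : R) : R :=
  ((1 + a) ^ n * a ^ m * b + INR n * Iint m (n - 1) s a) / Iint m n s a.

Definition psi_tilde (m n : nat) (a b s x : R) : R :=
  (mu m n a b s * Iint m n s x - INR n * Iint m (n - 1) s x)
  / ((1 + x) ^ n * x ^ m).

(** The formula for [mu_s] says exactly that
    [mu_s I_{m,n,s}(a) = (1+a)^n a^m b + n I_{m,n-1,s}(a)], so by Chasles
    [psi~_s(x) ((1+x)^n x^m) = (1+a)^n a^m b + n I_{m,n-1,x}(a) - mu_s I_{m,n,x}(a)],
    which decreases in [mu_s]; it therefore suffices that [mu_lambda < mu_s].
    Comparing the identities for [mu_s] and [mu_lambda], this reduces to
    [mu_lambda \int_s^lambda (1+t)^n t^m dt < n \int_s^lambda (1+t)^(n-1) t^m dt],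
    i.e., since [n = mu_lambda (1+lambda)], to
    [\int_s^lambda (1+t) g < (1+lambda) \int_s^lambda g] for the positive weight
    [g = (1+t)^(n-1) t^m], which holds whichever side of [lambda] the point [s] lies. *)

From Stdlib Require Import Reals Lra Lia ssreflect.
From Coquelicot Require Import Coquelicot.
Open Scope R_scope.

Lemma RInt_affine_weight_lt (g : R -> R) (s c : R) :
  (forall t, continuous g t) ->
  (forall t, Rmin s c < t < Rmax s c -> 0 < g t) -> s <> c ->
  RInt (fun t => (1 + t) * g t) s c < (1 + c) * RInt g s c.
Proof.
  move=> g_cont g_pos s_neq_c.
  have cont_lhs t : continuous (fun t => (1 + t) * g t) t.
    apply: continuous_mult => //.
    apply: continuous_plus; [exact: continuous_const | exact: continuous_id].
  have cont_rhs t : continuous (fun t => (1 + c) * g t) t.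
    exact: continuous_mult (continuous_const _ _) (g_cont t).
  have -> : (1 + c) * RInt g s c = RInt (fun t => (1 + c) * g t) s c.
    symmetry; apply: (RInt_scal g s c (1 + c)).
    exact: ex_RInt_continuous.
  have [s_lt_c | c_lt_s] : s < c \/ c < s by lra.
  - apply: RInt_lt => // t t_in.
    have := g_pos t ltac:(rewrite Rmin_left ?Rmax_right; lra); nra.
  - rewrite -(opp_RInt_swap (fun t => (1 + t) * g t));
      last exact: ex_RInt_continuous.
    rewrite -(opp_RInt_swap (fun t => (1 + c) * g t));
      last exact: ex_RInt_continuous.
    apply: Ropp_lt_contravar; apply: RInt_lt => // t t_in.
    have := g_pos t ltac:(rewrite Rmin_right ?Rmax_left; lra); nra.
Qed.

Definition weight (m n : nat) (t : R) : R := (1 + t) ^ n * t ^ m.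

Lemma Iint_weight (m n : nat) (s x : R) : Iint m n s x = RInt (weight m n) s x.
Proof. by []. Qed.

Lemma continuous_weight (m n : nat) (t : R) : continuous (weight m n) t.
Proof. apply: ex_derive_continuous; rewrite /weight; auto_derive; easy. Qed.

Lemma ex_RInt_weight (m n : nat) (s x : R) : ex_RInt (weight m n) s x.
Proof. apply: ex_RInt_continuous => t _; exact: continuous_weight. Qed.

Lemma weight_gt0 (m n : nat) (t : R) : 0 < t -> 0 < weight m n t.
Proof. move=> t_gt0; apply: Rmult_lt_0_compat; apply: pow_lt; lra. Qed.

Lemma weight_pred (m n : nat) (t : R) :
  (1 <= n)%nat -> weight m n t = (1 + t) * weight m (n - 1) t.
Proof.
  move=> n_ge1; rewrite /weight.
  replace n with (S (n - 1)) at 1 by lia; simpl; ring.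
Qed.

Lemma Iint_gt0 (m n : nat) (s x : R) : 0 <= s < x -> 0 < Iint m n s x.
Proof.
  move=> s_x; apply: RInt_gt_0; first lra.
  - move=> t t_in; apply: weight_gt0; lra.
  - move=> t _; exact: continuous_weight.
Qed.

Lemma Iint_Chasles (m n : nat) (s x y : R) :
  Iint m n s x + Iint m n x y = Iint m n s y.
Proof. exact: RInt_Chasles (ex_RInt_weight m n s x) (ex_RInt_weight m n x y). Qed.

Section Mu_psi.

Variables (m n : nat) (a b : R).
Hypothesis n_ge1 : (1 <= n)%nat.

Let C := (1 + a) ^ n * a ^ m * b.

Lemma mu_Iint (s : R) : 0 <= s < a ->
  mu m n a b s * Iint m n s a = C + INR n * Iint m (n - 1) s a.
Proof.
  move=> s_a; have := Iint_gt0 m n s a s_a; rewrite /mu -/C => I_gt0.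
  field; lra.
Qed.

Lemma psi_tilde_tail (s x : R) : 0 <= s < a ->
  psi_tilde m n a b s x
  = (C + INR n * Iint m (n - 1) x a - mu m n a b s * Iint m n x a) / weight m n x.
Proof.
  move=> s_a; rewrite /psi_tilde -[_ ^ n * _]/(weight m n x); congr (_ / _).
  have := mu_Iint s s_a.
  rewrite -(Iint_Chasles m n s x a) -(Iint_Chasles m (n - 1) s x a); nra.
Qed.

Lemma mu_critical_lt (s lambda : R) :
  0 <= s < a -> 0 <= lambda < a -> mu m n a b lambda * (1 + lambda) = INR n ->
  s <> lambda -> mu m n a b lambda < mu m n a b s.
Proof.
  move=> s_a lambda_a critical s_neq; set M := mu m n a b lambda.
  have M_gt0 : 0 < M.
    have : 0 < INR n by apply: lt_0_INR; lia.
    rewrite -critical -/M; nra.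
  have gap : M * Iint m n s lambda < INR n * Iint m (n - 1) s lambda.
    rewrite -critical -/M Rmult_assoc !Iint_weight.
    rewrite (RInt_ext _ (fun t => (1 + t) * weight m (n - 1) t));
      last by move=> t _; exact: weight_pred.
    apply: Rmult_lt_compat_l => //; apply: RInt_affine_weight_lt => //.
    - exact: continuous_weight.
    - move=> t t_in; apply: weight_gt0.
      have : 0 <= Rmin s lambda by apply: Rmin_glb; lra.
      lra.
  have M_lambda := mu_Iint lambda lambda_a; rewrite -/M in M_lambda.
  apply: (Rmult_lt_reg_r (Iint m n s a)); first exact: Iint_gt0.
  rewrite mu_Iint // -(Iint_Chasles m n s lambda a) -(Iint_Chasles m (n - 1) s lambda a).
  nra.
Qed.

Lemma psi_tilde_lt_of_mu_lt (r s x : R) :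
  0 <= r < a -> 0 <= s < a -> 0 < x < a ->
  mu m n a b r < mu m n a b s -> psi_tilde m n a b s x < psi_tilde m n a b r x.
Proof.
  move=> r_a s_a x_a mu_lt; rewrite !psi_tilde_tail //.
  apply: Rmult_lt_compat_r.
  { apply: Rinv_0_lt_compat; apply: weight_gt0; lra. }
  have := Iint_gt0 m n x a ltac:(lra); nra.
Qed.

End Mu_psi.

Theorem corollary3p5 (n m : nat) (a b lambda : R) :
  (1 <= n)%nat -> 0 < a -> 0 < b ->
  mu m n a b 0 <= INR n ->
  0 <= lambda < a ->
  mu m n a b lambda * (1 + lambda) = INR n ->
  forall s x : R, 0 < s < a -> s <> lambda -> 0 < x < a ->
    psi_tilde m n a b s x < psi_tilde m n a b lambda x.
Proof.
  move=> n_ge1 _ _ _ lambda_a critical s x s_a s_neq x_a.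
  apply: psi_tilde_lt_of_mu_lt; [lra | lra | lra |].
  apply: mu_critical_lt => //; lra.
Qed.
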